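(* Let $T:[\ell,r)\to[\ell,r)$ be a $k$-IET over the ordered alphabet $\mathcal{A}$ with partition $(I_a)_{a\in\mathcal{A}}$ and permutation $\pi\in S_{\mathcal{A}}$. Let $\mathcal{B}\subset\mathcal{A}$ be a proper nonempty $T$-invariant sub-alphabet whose intervals $I_b$, $b\in\mathcal{B}$, are contiguous, and let $\overline{\mathcal{B}}=\mathcal{A}\setminus\mathcal{B}$. Then $S_{\mathcal{B}}$ is the IET over $\mathcal{B}$ (with the order inherited from $\mathcal{A}$) with permutation $\pi|_{\mathcal{B}}$, and $S_{\overline{\mathcal{B}}}$ is the IET over $\overline{\mathcal{B}}$ (with the inherited order) with permutation $\pi|_{\overline{\mathcal{B}}}$.
   Context: A $k$-IET on $[\ell,r)$ over $\mathcal{A}=\{a_1<\dots<a_k\}$ is given by a partition of $[\ell,r)$ into left-closed right-open intervals $(I_a)_{a\in\mathcal{A}}$ of positive length ordered left to right according to the order of $\mathcal{A}$, and a permutation $\pi$ of $\mathcal{A}$; $T(x)=x+\tau_a$ on $I_a$ with $\tau_a=\sum_{b:\,\pi^{-1}(b)<\pi^{-1}(a)}|I_b|-\sum_{b<a}|I_b|$, so the images $T(I_{\pi(a_1)}),\dots,T(I_{\pi(a_k)})$ appear from left to right. Write $I_{\mathcal{B}}=\bigcup_{b\in\mathcal{B}}I_b=[\gamma_{\mathcal{B}},\delta_{\mathcal{B}})$; $\mathcal{B}$ is $T$-invariant if $T(I_{\mathcal{B}})=I_{\mathcal{B}}$. Let $I_{\overline{\mathcal{B}}}=[\ell,r)\setminus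 I_{\mathcal{B}}$. Define $S_{\mathcal{B}}=T|_{I_{\mathcal{B}}}$. If $I_{\overline{\mathcal{B}}}$ is an interval, $S_{\overline{\mathcal{B}}}=T|_{I_{\overline{\mathcal{B}}}}$; otherwise $I_{\overline{\mathcal{B}}}=[\ell,\gamma_{\mathcal{B}})\cup[\delta_{\mathcal{B}},r)$, and with the gluing map $G(x)=x$ on $[\ell,\gamma_{\mathcal{B}})$, $G(x)=x-|I_{\mathcal{B}}|$ on $[\delta_{\mathcal{B}},r)$, one sets $S_{\overline{\mathcal{B}}}=G\circ T|_{I_{\overline{\mathcal{B}}}}\circ G^{-1}$ on $[\ell,r-|I_{\mathcal{B}}|)$, with partition given by the images $G(I_b)$, $b\in\overline{\mathcal{B}}$. *)

(* Alphabet A = {a_1 < ... < a_k} is modelled as 'I_k with its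
   natural order; lengths |I_a| are lam a in a real field R. *)
From HB Require Import structures.
From mathcomp Require Import all_boot all_order all_algebra all_fingroup.
Set Implicit Arguments. Unset Strict Implicit. Unset Printing Implicit Defensive.
Import Order.TTheory GRing.Theory Num.Theory.
Local Open Scope ring_scope.

Section IET.
Variables (R : realFieldType) (k : nat).

Definition top (C : {set 'I_k}) : seq 'I_k := [seq a <- enum 'I_k | a \in C].

Definition bot (C : {set 'I_k}) (sig : 'I_k -> 'I_k) : seq 'I_k :=
  [seq sig a | a <- top C].

Definition lenS (lam : 'I_k -> R) (s : seq 'I_k) : R := \sum_(b <- s) lam b.

Definition left_end (l : R) (lam : 'I_k -> R) (C : {set 'I_k}) (a : 'I_k) : R :=
  l + lenS lam (take (index a (top C)) (top C)).

Definition inI (l : R) (lam : 'I_k -> R) (C : {set 'I_k}) (a : 'I_k) (x : R) : bool :=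
  (left_end l lam C a <= x) && (x < left_end l lam C a + lam a).

Definition tau (lam : 'I_k -> R) (C : {set 'I_k}) (sig : 'I_k -> 'I_k) (a : 'I_k) : R :=
  lenS lam (take (index a (bot C sig)) (bot C sig))
  - lenS lam (take (index a (top C)) (top C)).

(* the IET over sub-alphabet C, on [l, l + sum_{c in C} lam c), with partition
   given by the lengths lam and permutation sig (a permutation of C) *)
Definition iet (l : R) (lam : 'I_k -> R) (C : {set 'I_k}) (sig : 'I_k -> 'I_k)
  (x : R) : R :=
  match [pick a in C | inI l lam C a x] with
  | Some a => x + tau lam C sig a
  | None => x
  end.

Definition T (l : R) (lam : 'I_k -> R) (pi : {perm 'I_k}) : R -> R :=
  iet l lam [set: 'I_k] pi.

Definition r_end (l : R) (lam : 'I_k -> R) : R := l + \sum_a lam a.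

(* restriction pi|_C: the permutation of C listing the letters of C in the
   order in which they appear in the bottom order pi(a_1), ..., pi(a_k) *)
Definition restr (pi : {perm 'I_k}) (C : {set 'I_k}) (a : 'I_k) : 'I_k :=
  if a \in C then nth a [seq b <- [seq pi c | c <- enum 'I_k] | b \in C]
                        (index a (top C))
  else a.

Definition inIB (l : R) (lam : 'I_k -> R) (B : {set 'I_k}) (x : R) : bool :=
  [exists b in B, inI l lam [set: 'I_k] b x].

Definition T_invariant (l : R) (lam : 'I_k -> R) (pi : {perm 'I_k}) (B : {set 'I_k}) :=
  forall y, (exists x, inIB l lam B x /\ T l lam pi x = y) <-> inIB l lam B y.

(* the intervals I_b, b in B, are contiguous: B is an interval of letters *)
Definition contiguous (B : {set 'I_k}) :=
  forall a b c : 'I_k, a \in B -> c \in B -> (a <= b <= c)%N -> b \in B.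

Definition gammaB (l : R) (lam : 'I_k -> R) (B : {set 'I_k}) : R :=
  l + \sum_(a : 'I_k | [forall b in B, (a < b)%N]) lam a.
Definition lenB (lam : 'I_k -> R) (B : {set 'I_k}) : R := \sum_(b in B) lam b.
Definition deltaB (l : R) (lam : 'I_k -> R) (B : {set 'I_k}) : R :=
  gammaB l lam B + lenB lam B.

Definition glue (l : R) (lam : 'I_k -> R) (B : {set 'I_k}) (x : R) : R :=
  if x < gammaB l lam B then x else x - lenB lam B.
Definition unglue (l : R) (lam : 'I_k -> R) (B : {set 'I_k}) (y : R) : R :=
  if y < gammaB l lam B then y else y + lenB lam B.

Definition compl_interval (l : R) (lam : 'I_k -> R) (B : {set 'I_k}) : bool :=
  (gammaB l lam B == l) || (deltaB l lam B == r_end l lam).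

(* S_B = T restricted to I_B *)
Definition S_B (l : R) (lam : 'I_k -> R) (pi : {perm 'I_k}) : R -> R := T l lam pi.

Definition S_Bbar (l : R) (lam : 'I_k -> R) (pi : {perm 'I_k}) (B : {set 'I_k})
  (y : R) : R :=
  if compl_interval l lam B then T l lam pi y
  else glue l lam B (T l lam pi (unglue l lam B y)).
Definition left_Bbar (l : R) (lam : 'I_k -> R) (B : {set 'I_k}) : R :=
  if compl_interval l lam B then (if gammaB l lam B == l then deltaB l lam B else l)
  else l.
Definition part_Bbar (l : R) (lam : 'I_k -> R) (B : {set 'I_k}) (b : 'I_k) (y : R)
  : Prop :=
  if compl_interval l lam B then is_true (inI l lam [set: 'I_k] b y)
  else exists x, inI l lam [set: 'I_k] b x /\ glue l lam B x = y.

End IET.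

(* Measure positions by offsets: the offset of a letter in a word of letters is the total
   length of the letters before it.  The left end of I_a is l plus the offset of a in the
   top order, and T translates I_a by the difference of its offsets in the bottom and top
   orders.  Contiguity of B means that the letters of the complement preceding a letter
   of B in the top order are exactly those below B, of total length G = gamma_B - l, and
   that the letters of B preceding a letter of the complement weigh 0 or |I_B|.
   Invariance says that T(I_b) lies in [gamma_B, delta_B) for b in B and outside it for
   the other letters, so the same two facts hold in the bottom order.  Filtering the
   bottom order to a sub-alphabet gives the bottom order of the restricted permutation;
   hence the offsets in the full IET are the offsets in the sub-IET shifted by G (on B),
   resp. by 0 or |I_B|, which is exactly what the gluing map removes (on the complement). *)

From HB Require Import structures.
From mathcomp Require Import all_boot all_order all_algebra all_fingroup.
From mathcomp Require Import lra.
Set Implicit Arguments. Unset Strict Implicit. Unset Printing Implicit Defensive.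
Import Order.TTheory GRing.Theory Num.Theory.
Local Open Scope ring_scope.

Section Offsets.
Variables (R : realFieldType) (T : eqType) (lam : T -> R).
Hypothesis lam_gt0 : forall a, 0 < lam a.

Definition offset (s : seq T) (a : T) : R := \sum_(c <- take (index a s) s) lam c.

Definition offset_in (P : pred T) (s : seq T) (a : T) : R :=
  \sum_(c <- take (index a s) s | P c) lam c.

Lemma offset_in_predT s a : offset_in predT s a = offset s a.
Proof. by []. Qed.

Lemma sum_lam_ge0 (s : seq T) (P : pred T) : 0 <= \sum_(c <- s | P c) lam c.
Proof. by apply: sumr_ge0 => c _; apply: ltW. Qed.

Lemma offset_ge0 s a : 0 <= offset s a.
Proof. exact: sum_lam_ge0. Qed.

Lemma offset_head x s : offset (x :: s) x = 0.
Proof. by rewrite /offset /= eqxx big_nil. Qed.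

Lemma offset_cons x s a : x != a -> offset (x :: s) a = lam x + offset s a.
Proof. by move=> xa; rewrite /offset /= (negbTE xa) big_cons. Qed.

Lemma offset_le_sum s a : a \in s -> offset s a + lam a <= \sum_(c <- s) lam c.
Proof.
elim: s => [|x s IH] //; rewrite in_cons big_cons.
case: (eqVneq x a) => [->|xa] /= => [_|as_].
  by rewrite offset_head add0r lerDl sum_lam_ge0.
by rewrite offset_cons // -addrA lerD2l IH.
Qed.

Lemma offset_index_lt s a b : uniq s -> b \in s -> (index a s < index b s)%N ->
  offset s a + lam a <= offset s b.
Proof.
elim: s => [|x s IH] //= /andP[xs us]; rewrite in_cons.
case: (eqVneq x a) => [<-|xa]; case: (eqVneq x b) => [<-|xb] //= bs.
  by rewrite offset_head offset_cons // add0r lerDl offset_ge0.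
by rewrite ltnS !offset_cons // -addrA lerD2l; apply: IH.
Qed.

Lemma offset_cover s y : uniq s -> 0 <= y < \sum_(c <- s) lam c ->
  exists2 a, a \in s & offset s a <= y < offset s a + lam a.
Proof.
elim: s y => [|x s IH] y /=.
  by rewrite big_nil => _ /andP[y0 /(le_lt_trans y0)]; rewrite ltxx.
rewrite big_cons => /andP[xs us] /andP[y0 ylt].
case: (ltP y (lam x)) => [yx|xy].
  by exists x; rewrite ?mem_head // offset_head add0r y0.
have [|a as_ ha] := IH (y - lam x) us; first by apply/andP; split; lra.
have xa : x != a by apply: contraNneq xs => ->.
exists a; first by rewrite in_cons as_ orbT.
by rewrite offset_cons //; move: ha => /andP[? ?]; apply/andP; split; lra.
Qed.

Lemma offset_cover_uniq s y a b : uniq s -> a \in s -> b \in s ->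
  offset s a <= y < offset s a + lam a -> offset s b <= y < offset s b + lam b -> a = b.
Proof.
move=> us as_ bs /andP[? ?] /andP[? ?].
case: (ltngtP (index a s) (index b s)) => [ab|ba|]; last exact: index_inj.
- by exfalso; have := offset_index_lt us bs ab; lra.
- by exfalso; have := offset_index_lt us as_ ba; lra.
Qed.

Lemma filter_take_index (P : pred T) s a : a \in s -> P a ->
  filter P (take (index a s) s) = take (index a (filter P s)) (filter P s).
Proof.
elim: s => [|x s IH] //=; rewrite in_cons.
case: (eqVneq x a) => [->|xa] /= => [_ ->|as_ Pa] /=; first by rewrite eqxx.
by case: (P x) => /=; rewrite ?(negbTE xa) IH.
Qed.

Lemma offset_filter (P : pred T) s a : a \in s -> P a ->
  offset s a = offset_in (predC P) s a + offset (filter P s) a.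
Proof.
move=> as_ Pa; rewrite /offset -filter_take_index // big_filter.
by rewrite (bigID P) addrC.
Qed.

End Offsets.

Section Enumerations.
Variables (R : realFieldType) (T : finType) (lam : T -> R) (u : seq T).
Hypotheses (lam_gt0 : forall a, 0 < lam a) (u_uniq : uniq u) (u_full : forall c, c \in u).

Lemma sum_lam_le_sub (P Q : pred T) : subpred P Q ->
  \sum_(a | P a) lam a <= \sum_(a | Q a) lam a.
Proof.
move=> PQ; rewrite [X in X <= _]big_mkcond [X in _ <= X]big_mkcond.
apply: ler_sum => a _; case: ifP => [/PQ -> //|_]; case: ifP => _ //.
exact: ltW.
Qed.

Lemma sum_enumeration (P : pred T) :
  \sum_(c <- u | P c) lam c = \sum_(c | P c) lam c.
Proof.
rewrite -big_filter big_uniq ?filter_uniq //.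
by apply: eq_bigl => c; rewrite mem_filter u_full andbT.
Qed.

Lemma offset_in_enumeration (P : pred T) a :
  offset_in lam P u a = \sum_(c | P c && (index c u < index a u)%N) lam c.
Proof.
rewrite /offset_in -big_filter big_uniq ?filter_uniq ?take_uniq //.
by apply: eq_bigl => c; rewrite mem_filter in_take.
Qed.

End Enumerations.

Lemma map_nth_index (T : eqType) (t s : seq T) : uniq t -> size s = size t ->
  [seq nth a s (index a t) | a <- t] = s.
Proof.
case: t => [|x t] ut st; first by move/size0nil: st.
apply: (eq_from_nth (x0 := x)); first by rewrite size_map st.
move=> i; rewrite size_map => it.
by rewrite (nth_map x) // index_uniq //; apply: set_nth_default; rewrite st.
Qed.

Section Alphabet.
Variables (R : realFieldType) (k : nat) (lam : 'I_k -> R).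
Hypothesis lam_gt0 : forall a, 0 < lam a.

Lemma top_setT : top [set: 'I_k] = enum 'I_k.
Proof. by rewrite /top (eq_filter (a2 := predT)) ?filter_predT // => a; rewrite in_setT. Qed.

Lemma uniq_top (C : {set 'I_k}) : uniq (top C).
Proof. exact/filter_uniq/enum_uniq. Qed.

Lemma mem_top (C : {set 'I_k}) a : (a \in top C) = (a \in C).
Proof. by rewrite mem_filter mem_enum andbT. Qed.

Lemma sum_top (C : {set 'I_k}) : \sum_(c <- top C) lam c = \sum_(c in C) lam c.
Proof.
rewrite big_filter (sum_enumeration _ (enum_uniq _)) // => c.
by rewrite mem_enum.
Qed.

Lemma inIE l (C : {set 'I_k}) a x : inI l lam C a x =
  (l + offset lam (top C) a <= x < l + offset lam (top C) a + lam a).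
Proof. by []. Qed.

Lemma inI_shift l (C : {set 'I_k}) a x d : inI l lam C a (x - d) = inI (l + d) lam C a x.
Proof. by rewrite !inIE; apply/idP/idP => /andP[? ?]; apply/andP; split; lra. Qed.

Lemma iet_on l (C : {set 'I_k}) sig a x : a \in C -> inI l lam C a x ->
  iet l lam C sig x = x + (offset lam (bot C sig) a - offset lam (top C) a).
Proof.
move=> aC xa; rewrite /iet; case: pickP => [a' /andP[a'C xa']|/(_ a)]; last by rewrite aC xa.
suff -> : a' = a by [].
move: xa xa'; rewrite !inIE => /andP[? ?] /andP[? ?].
apply: (offset_cover_uniq lam_gt0 (y := x - l) (uniq_top C)); rewrite ?mem_top //;
  apply/andP; split; lra.
Qed.

Lemma offset_top_split (C : {set 'I_k}) a : a \in C ->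
  offset lam (enum 'I_k) a =
  \sum_(c | (c \notin C) && (c < a)%N) lam c + offset lam (top C) a.
Proof.
move=> aC; rewrite (offset_filter lam (P := fun c => c \in C)) ?mem_enum //.
rewrite offset_in_enumeration ?enum_uniq //; last by move=> c; rewrite mem_enum.
by congr (_ + _); apply: eq_bigl => c; rewrite !index_enum_ord.
Qed.

Lemma inI_setT l a x : inI l lam [set: 'I_k] a x =
  (l + offset lam (enum 'I_k) a <= x < l + offset lam (enum 'I_k) a + lam a).
Proof. by rewrite inIE top_setT. Qed.

Lemma offset_enum (a : 'I_k) :
  offset lam (enum 'I_k) a = \sum_(c : 'I_k | (c < a)%N) lam c.
Proof.
rewrite -offset_in_predT (offset_in_enumeration _ (enum_uniq _)) => [|c]; last exact: mem_enum.
by apply: eq_bigl => c; rewrite !index_enum_ord.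
Qed.

Lemma offset_enum_add (a : 'I_k) :
  offset lam (enum 'I_k) a + lam a = \sum_(c : 'I_k | (c <= a)%N) lam c.
Proof.
rewrite offset_enum [RHS](bigD1 a) //= addrC; congr (_ + _).
by apply: eq_bigl => c; rewrite ltn_neqAle val_eqE andbC.
Qed.

Lemma offset_enum_le_sum a : offset lam (enum 'I_k) a + lam a <= \sum_c lam c.
Proof. by rewrite offset_enum_add; apply: sum_lam_le_sub. Qed.

Section Permutation.
Variable pi : {perm 'I_k}.
Local Notation S := (bot [set: 'I_k] pi).

Lemma uniq_bot_setT : uniq S.
Proof. by rewrite /bot map_inj_uniq ?uniq_top //; apply: perm_inj. Qed.

Lemma mem_bot_setT a : a \in S.
Proof. by rewrite -(permKV pi a) map_f // mem_top in_setT. Qed.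

Lemma bot_restr (C : {set 'I_k}) : bot C (restr pi C) = [seq b <- S | b \in C].
Proof.
have size_restr : size [seq b <- S | b \in C] = size (top C).
  rewrite !size_filter; apply/seq.permP/uniq_perm; rewrite ?uniq_bot_setT ?enum_uniq //.
  by move=> c; rewrite mem_bot_setT mem_enum.
rewrite /bot -[RHS](map_nth_index (uniq_top C) size_restr).
apply/eq_in_map => a; rewrite mem_top => aC.
by rewrite /restr aC /bot top_setT.
Qed.

Lemma offset_bot_split (C : {set 'I_k}) a : a \in C ->
  offset lam S a =
  \sum_(c | (c \notin C) && (index c S < index a S)%N) lam c
  + offset lam (bot C (restr pi C)) a.
Proof.
move=> aC; rewrite bot_restr (offset_filter lam (P := fun c => c \in C)) ?mem_bot_setT //.
by rewrite offset_in_enumeration ?uniq_bot_setT //; apply: mem_bot_setT.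
Qed.

Lemma offset_bot_le_sum a : offset lam S a + lam a <= \sum_c lam c.
Proof.
rewrite -(sum_enumeration _ uniq_bot_setT mem_bot_setT).
exact/offset_le_sum/mem_bot_setT.
Qed.

Variable l : R.

Lemma T_on a x : inI l lam [set: 'I_k] a x ->
  T l lam pi x = x + offset lam S a - offset lam (enum 'I_k) a.
Proof. by move=> xa; rewrite /T (iet_on _ _ xa) ?in_setT // top_setT addrA. Qed.

Lemma T_onto a y : l + offset lam S a <= y < l + offset lam S a + lam a ->
  exists x, inI l lam [set: 'I_k] a x /\ T l lam pi x = y.
Proof.
move=> /andP[? ?]; exists (y - offset lam S a + offset lam (enum 'I_k) a).
have xa : inI l lam [set: 'I_k] a (y - offset lam S a + offset lam (enum 'I_k) a).
  by rewrite inI_setT; apply/andP; split; lra.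
by split => //; rewrite (T_on xa); lra.
Qed.

End Permutation.
End Alphabet.

Section InvariantSubalphabet.
Variables (R : realFieldType) (k : nat) (l : R) (lam : 'I_k -> R)
  (pi : {perm 'I_k}) (B : {set 'I_k}).
Hypotheses (lam_gt0 : forall a, 0 < lam a) (B_neq0 : B != set0)
  (B_contiguous : contiguous B) (B_invariant : T_invariant l lam pi B).

Local Notation E := (enum 'I_k).
Local Notation S := (bot [set: 'I_k] pi).
Local Notation below a := [forall b in B, (a < b)%N].
Local Notation G := (\sum_(a : 'I_k | below a) lam a).
Local Notation LB := (\sum_(b in B) lam b).

Lemma gammaBE : gammaB l lam B = l + G. Proof. by []. Qed.
Lemma deltaBE : deltaB l lam B = l + G + LB. Proof. by []. Qed.

Lemma sum_B_gt0 : 0 < LB.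
Proof.
case/set0Pn: B_neq0 => b bB; rewrite (bigD1 b) //= ltr_pwDl //.
exact: sum_lam_ge0.
Qed.

Lemma sum_below_ge0 : 0 <= G.
Proof. exact: sum_lam_ge0. Qed.

Lemma below_notin (a : 'I_k) : below a -> a \notin B.
Proof. by move/forall_inP=> aB; apply/negP => /aB; rewrite ltnn. Qed.

Lemma notin_below_or_above c : c \notin B ->
  below c \/ (forall b, b \in B -> (b < c)%N).
Proof.
move=> cB; case: (boolP (below c)) => [|/forall_inPn[b1 b1B]]; first by left.
rewrite -leqNgt => b1c; right => b bB; rewrite ltnNge; apply: contra cB => cb.
by apply: (B_contiguous b1B bB); rewrite b1c.
Qed.

Lemma offset_top_in a : a \in B -> offset lam E a = G + offset lam (top B) a.
Proof.
move=> aB; rewrite (offset_top_split lam aB); congr (_ + _); apply: eq_bigl => c.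
apply/andP/idP => [[cB ca]|cb]; last by split; [exact: below_notin|exact: (forall_inP cb)].
apply/forall_inP => b bB; rewrite ltnNge; apply: contra cB => bc.
by apply: (B_contiguous bB aB); rewrite bc ltnW.
Qed.

Lemma inI_setT_in b y : b \in B ->
  inI l lam [set: 'I_k] b y = inI (gammaB l lam B) lam B b y.
Proof. by move=> bB; rewrite inI_setT inIE offset_top_in // addrA. Qed.

Lemma inIBE x : inIB l lam B x = (l + G <= x < l + G + LB).
Proof.
apply/existsP/idP => [[b /andP[bB]]|/andP[? ?]].
  rewrite inI_setT_in // inIE gammaBE => /andP[? ?].
  have bt : b \in top B by rewrite mem_top.
  have := offset_le_sum lam_gt0 bt; have := offset_ge0 lam_gt0 (top B) b.
  by rewrite sum_top => ? ?; apply/andP; split; lra.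
have [|a] := offset_cover (lam := lam) (y := x - (l + G)) (uniq_top B).
  by rewrite sum_top; apply/andP; split; lra.
rewrite mem_top => aB /andP[? ?]; exists a.
by rewrite aB inI_setT_in // inIE gammaBE; apply/andP; split; lra.
Qed.

Lemma offset_bot_in_range b : b \in B ->
  G <= offset lam S b /\ offset lam S b + lam b <= G + LB.
Proof.
move=> bB; pose x0 := l + offset lam E b.
have x0b : inI l lam [set: 'I_k] b x0.
  by rewrite inI_setT /x0 lexx ltrDl lam_gt0.
have x0B : inIB l lam B x0 by apply/existsP; exists b; rewrite bB.
have := (B_invariant _).1 (ex_intro _ x0 (conj x0B erefl)).
rewrite inIBE (T_on lam_gt0 pi x0b) /x0 => /andP[? ?]; split; first lra.
(* Otherwise delta_B, which is not in I_B, would be the image of a point of I_b. *)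
rewrite leNgt; apply/negP => ?.
have [|x [xb Tx]] := T_onto lam_gt0 (pi := pi) (l := l) (a := b) (y := l + G + LB).
  by apply/andP; split; lra.
have xB : inIB l lam B x by apply/existsP; exists b; rewrite bB.
have := (B_invariant _).1 (ex_intro _ x (conj xB Tx)).
by rewrite inIBE ltxx andbF.
Qed.

Lemma offset_bot_notin_range c : c \notin B ->
  offset lam S c + lam c <= G \/ G + LB <= offset lam S c.
Proof.
move=> cB; case: (lerP (offset lam S c + lam c) G) => [|c_end]; first by left.
case: (lerP (G + LB) (offset lam S c)) => [|c_start]; first by right.
have := sum_B_gt0; have := lam_gt0 c => ? ?.
(* A point of T(I_c) inside I_B is, by invariance, also in some T(I_b) with b in B. *)
set y := l + Num.max G (offset lam S c).
have yc : l + offset lam S c <= y < l + offset lam S c + lam c.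
  by rewrite /y; case: (leP G (offset lam S c)) => ?; apply/andP; split; lra.
have /(B_invariant _).2 [x [/existsP[b /andP[bB xb]] Txy]] : inIB l lam B y.
  by rewrite inIBE /y; case: (leP G (offset lam S c)) => ?; apply/andP; split; lra.
have yb : l + offset lam S b <= y < l + offset lam S b + lam b.
  rewrite -Txy (T_on lam_gt0 pi xb); move: xb; rewrite inI_setT => /andP[? ?].
  by apply/andP; split; lra.
have cb : c = b.
  move: yc yb => /andP[? ?] /andP[? ?].
  apply: (offset_cover_uniq lam_gt0 (y := y - l) (uniq_bot_setT pi));
    rewrite ?mem_bot_setT //; apply/andP; split; lra.
by move: cB; rewrite cb bB.
Qed.

Lemma notin_before_in_bot a : a \in B -> forall c,
  ((c \notin B) && (index c S < index a S)%N) = ((c \notin B) && (offset lam S c < G)).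
Proof.
move=> aB c; case: (boolP (c \in B)) => //= cB.
have [? ?] := offset_bot_in_range aB.
have := lam_gt0 a; have := lam_gt0 c; have := sum_B_gt0 => ? ? ?.
case: ltngtP => [ca|ac|/esym/(index_inj a (mem_bot_setT pi a) (mem_bot_setT pi c)) ac].
- have := offset_index_lt lam_gt0 (uniq_bot_setT pi) (mem_bot_setT pi a) ca.
  by case: (offset_bot_notin_range cB) => ? ?; apply/esym/idP; lra.
- have := offset_index_lt lam_gt0 (uniq_bot_setT pi) (mem_bot_setT pi c) ac.
  by move=> ?; apply/esym/negbTE; rewrite -leNgt; lra.
- by move: cB; rewrite -ac aB.
Qed.

Lemma sum_below_le (P : pred 'I_k) : (forall a : 'I_k, below a -> P a) ->
  G <= \sum_(a | P a && (a \notin B)) lam a.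
Proof.
move=> belowP; apply: sum_lam_le_sub => // a a_below.
by rewrite belowP //= below_notin.
Qed.

Lemma offset_bot_hits_G : exists2 x, x \in B & offset lam S x = G.
Proof.
have G_LB_le : G + LB <= \sum_a lam a.
  by rewrite [leRHS](bigID (mem B)) /= addrC lerD2r; apply: (sum_below_le (P := predT)).
have [|x _ /andP[? ?]] := offset_cover (lam := lam) (y := G) (uniq_bot_setT pi).
  rewrite (sum_enumeration _ (uniq_bot_setT pi) (mem_bot_setT pi)).
  by have := sum_below_ge0; have := sum_B_gt0 => ? ?; apply/andP; split; lra.
case: (boolP (x \in B)) => xB.
  by exists x => //; have [? _] := offset_bot_in_range xB; lra.
have := sum_B_gt0 => ?.
by case: (offset_bot_notin_range xB) => ?; lra.
Qed.

Lemma sum_notin_before_in_bot a : a \in B ->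
  \sum_(c | (c \notin B) && (index c S < index a S)%N) lam c = G.
Proof.
move=> aB; have [x xB xG] := offset_bot_hits_G.
rewrite (eq_bigl _ _ (notin_before_in_bot aB)) -(eq_bigl _ _ (notin_before_in_bot xB)).
rewrite -[RHS]xG -offset_in_predT.
rewrite offset_in_enumeration ?uniq_bot_setT //; last exact: mem_bot_setT.
apply: eq_bigl => c; case: (boolP (c \in B)) => //= cB; apply/esym/negbTE/negP => cx.
have := offset_index_lt lam_gt0 (uniq_bot_setT pi) (mem_bot_setT pi x) cx.
by have [? _] := offset_bot_in_range cB; have := lam_gt0 c; lra.
Qed.

Lemma offset_bot_in a : a \in B ->
  offset lam S a = G + offset lam (bot B (restr pi B)) a.
Proof. by move=> aB; rewrite (offset_bot_split lam pi aB) sum_notin_before_in_bot. Qed.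

Lemma S_B_iet y : gammaB l lam B <= y < deltaB l lam B ->
  S_B l lam pi y = iet (gammaB l lam B) lam B (restr pi B) y.
Proof.
rewrite gammaBE deltaBE => /andP[? ?].
have [|a] := offset_cover (lam := lam) (y := y - (l + G)) (uniq_top B).
  by rewrite sum_top; apply/andP; split; lra.
rewrite mem_top => aB /andP[? ?].
have ya : inI (gammaB l lam B) lam B a y by rewrite inIE gammaBE; apply/andP; split; lra.
rewrite (iet_on lam_gt0 _ aB ya) /S_B (T_on lam_gt0 pi (_ : inI _ _ _ a y)).
  by rewrite offset_bot_in // offset_top_in //; lra.
by rewrite inI_setT_in.
Qed.

Local Notation B_before_top c := (\sum_(b : 'I_k | (b \in B) && (b < c)%N) lam b).
Local Notation B_before_bot c :=
  (\sum_(b : 'I_k | (b \in B) && (index b S < index c S)%N) lam b).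

Lemma offset_top_notin c : c \notin B ->
  offset lam E c = B_before_top c + offset lam (top (~: B)) c.
Proof.
move=> cB; have cB' : c \in ~: B by rewrite in_setC.
rewrite (offset_top_split lam cB'); congr (_ + _).
by apply: eq_bigl => b; rewrite in_setC negbK.
Qed.

Lemma offset_bot_notin c : c \notin B ->
  offset lam S c = B_before_bot c + offset lam (bot (~: B) (restr pi (~: B))) c.
Proof.
move=> cB; have cB' : c \in ~: B by rewrite in_setC.
rewrite (offset_bot_split lam pi cB'); congr (_ + _).
by apply: eq_bigl => b; rewrite in_setC negbK.
Qed.

Lemma B_before_top_cases c : c \notin B ->
  (B_before_top c = 0 /\ offset lam E c + lam c <= G) \/
  (B_before_top c = LB /\ G + LB <= offset lam E c).
Proof.
move=> cB; case: (notin_below_or_above cB) => [c_below|c_above]; [left|right]; split.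
- rewrite big_pred0 // => b; case: (boolP (b \in B)) => //= bB.
  by rewrite ltnNge ltnW //; apply: (forall_inP c_below).
- rewrite offset_enum_add; apply: sum_lam_le_sub => // a ac.
  by apply/forall_inP => b bB; apply: leq_ltn_trans ac (forall_inP c_below b bB).
- by apply: eq_bigl => b; case: (boolP (b \in B)) => //= /c_above.
- rewrite offset_enum [leRHS](bigID (mem B)) /= addrC.
  have -> : \sum_(a : 'I_k | (a < c)%N && (a \in B)) lam a = LB.
    by apply: eq_bigl => b; case: (boolP (b \in B)) => [/c_above ->|]; rewrite ?andbF.
  rewrite lerD2r; apply: sum_below_le => a a_below; case/set0Pn: B_neq0 => b bB.
  exact: ltn_trans (forall_inP a_below b bB) (c_above b bB).
Qed.

Lemma B_before_bot_cases c : c \notin B ->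
  (B_before_bot c = 0 /\ offset lam S c + lam c <= G) \/
  (B_before_bot c = LB /\ G + LB <= offset lam S c).
Proof.
move=> cB; have := lam_gt0 c => ?.
case: (offset_bot_notin_range cB) => c_range; [left|right]; split => //.
- rewrite big_pred0 // => b; case: (boolP (b \in B)) => //= bB; apply/negbTE/negP => bc.
  have := offset_index_lt lam_gt0 (uniq_bot_setT pi) (mem_bot_setT pi c) bc.
  by have [? _] := offset_bot_in_range bB; have := lam_gt0 b; lra.
- apply: eq_bigl => b; case: (boolP (b \in B)) => //= bB.
  case: ltngtP => // [cb|/(index_inj b (mem_bot_setT pi b) (mem_bot_setT pi c)) bc].
    have := offset_index_lt lam_gt0 (uniq_bot_setT pi) (mem_bot_setT pi b) cb.
    by have [_ ?] := offset_bot_in_range bB; have := lam_gt0 b; lra.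
  by move: cB; rewrite -bc bB.
Qed.

Lemma inI_setT_notin c x : c \notin B ->
  inI l lam [set: 'I_k] c x = inI (l + B_before_top c) lam (~: B) c x.
Proof.
move=> cB; rewrite -inI_shift inI_setT inIE offset_top_notin //.
by apply/idP/idP => /andP[? ?]; apply/andP; split; lra.
Qed.

Lemma compl_intervalE :
  compl_interval l lam B = (G == 0) || (G + LB == \sum_a lam a).
Proof.
by rewrite /compl_interval gammaBE deltaBE /r_end; congr orb; apply/eqP/eqP => ?; lra.
Qed.

Lemma left_BbarE : left_Bbar l lam B =
  if compl_interval l lam B then (if G == 0 then l + LB else l) else l.
Proof.
rewrite /left_Bbar gammaBE deltaBE.
have -> : (l + G == l) = (G == 0) by apply/eqP/eqP => ?; lra.
by case: eqP => [->|]; rewrite ?addr0.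
Qed.

Lemma left_Bbar_interval c : c \notin B -> compl_interval l lam B ->
  left_Bbar l lam B = l + B_before_top c.
Proof.
move=> cB ci; rewrite left_BbarE ci; move: ci; rewrite compl_intervalE.
have := offset_ge0 lam_gt0 E c; have := offset_enum_le_sum lam_gt0 c.
have := lam_gt0 c; have := sum_B_gt0; have := sum_below_ge0 => ? ? ? ? ?.
case: (B_before_top_cases cB) => -[-> ?].
  have /negbTE -> : G != 0 by apply/eqP => ?; lra.
  by rewrite addr0.
have /negbTE -> : G + LB != \sum_a lam a by apply/eqP => ?; lra.
by rewrite orbF => /eqP ->; rewrite eqxx.
Qed.

Lemma B_before_bot_interval c : c \notin B -> compl_interval l lam B ->
  B_before_bot c = B_before_top c.
Proof.
move=> cB; rewrite compl_intervalE.
have := offset_ge0 lam_gt0 E c; have := offset_enum_le_sum lam_gt0 c.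
have := offset_ge0 lam_gt0 S c; have := offset_bot_le_sum lam_gt0 pi c.
have := lam_gt0 c; have := sum_B_gt0; have := sum_below_ge0 => ? ? ? ? ? ? ?.
case: (B_before_top_cases cB) => -[-> ?]; case: (B_before_bot_cases cB) => -[-> ?] //;
  by case/orP => /eqP ?; lra.
Qed.

Lemma glue_on c x : c \notin B -> inI l lam [set: 'I_k] c x ->
  glue l lam B x = x - B_before_top c.
Proof.
move=> cB; rewrite inI_setT /glue /lenB gammaBE => /andP[? ?].
have := lam_gt0 c; have := sum_B_gt0 => ? ?.
by case: (B_before_top_cases cB) => -[-> ?]; case: ltP => ?; lra.
Qed.

Lemma unglue_on c y : c \notin B -> inI l lam (~: B) c y ->
  unglue l lam B y = y + B_before_top c.
Proof.
move=> cB; rewrite inIE /unglue /lenB gammaBE => /andP[? ?].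
have := lam_gt0 c; have := sum_B_gt0 => ? ?.
case: (B_before_top_cases cB) => -[e ?]; move: (offset_top_notin cB); rewrite e => ?;
  by case: ltP => ?; lra.
Qed.

Lemma glue_T_on c x : c \notin B -> inI l lam [set: 'I_k] c x ->
  glue l lam B (T l lam pi x) = T l lam pi x - B_before_bot c.
Proof.
move=> cB xc; rewrite (T_on lam_gt0 pi xc); move: xc.
rewrite inI_setT /glue /lenB gammaBE => /andP[? ?].
have := lam_gt0 c; have := sum_B_gt0 => ? ?.
by case: (B_before_bot_cases cB) => -[-> ?]; case: ltP => ?; lra.
Qed.

Lemma part_Bbar_iff b y : b \in ~: B ->
  part_Bbar l lam B b y <-> inI (left_Bbar l lam B) lam (~: B) b y.
Proof.
rewrite in_setC => bB; rewrite /part_Bbar; case: ifP => ci.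
  by rewrite (left_Bbar_interval bB ci) inI_setT_notin.
rewrite left_BbarE ci; split => [[x [xb <-]]|yb].
  by rewrite (glue_on bB xb) inI_shift -inI_setT_notin.
have xb : inI l lam [set: 'I_k] b (y + B_before_top b).
  by rewrite inI_setT_notin // -inI_shift addrK.
by exists (y + B_before_top b); rewrite (glue_on bB xb) addrK.
Qed.

Lemma S_Bbar_iet y : left_Bbar l lam B <= y < left_Bbar l lam B + lenB lam (~: B) ->
  S_Bbar l lam pi B y = iet (left_Bbar l lam B) lam (~: B) (restr pi (~: B)) y.
Proof.
rewrite /lenB => /andP[? ?].
have [|c] := offset_cover (lam := lam) (y := y - left_Bbar l lam B) (uniq_top (~: B)).
  by rewrite sum_top; apply/andP; split; lra.
rewrite mem_top in_setC => cB /andP[? ?].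
have yc : inI (left_Bbar l lam B) lam (~: B) c y by rewrite inIE; apply/andP; split; lra.
rewrite (iet_on lam_gt0 _ (_ : c \in ~: B) yc) ?in_setC // /S_Bbar; case: ifP => ci.
  rewrite (left_Bbar_interval cB ci) -inI_setT_notin // in yc.
  rewrite (T_on lam_gt0 pi yc) offset_bot_notin // offset_top_notin //.
  by rewrite (B_before_bot_interval cB ci); lra.
rewrite left_BbarE ci in yc; rewrite (unglue_on cB yc).
have xc : inI l lam [set: 'I_k] c (y + B_before_top c).
  by rewrite inI_setT_notin // -inI_shift addrK.
rewrite (glue_T_on cB xc) (T_on lam_gt0 pi xc) offset_bot_notin // offset_top_notin //.
lra.
Qed.

End InvariantSubalphabet.

Theorem lemma4p9 (R : realFieldType) (k : nat) (l : R) (lam : 'I_k -> R)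
  (pi : {perm 'I_k}) (B : {set 'I_k}) :
  (forall a, 0 < lam a) ->
  B != set0 -> B != [set: 'I_k] ->
  contiguous B ->
  T_invariant l lam pi B ->
  (* S_B is the IET over B (inherited order) with permutation pi|_B *)
  ((forall b, b \in B -> forall y,
      inI l lam [set: 'I_k] b y = inI (gammaB l lam B) lam B b y) /\
   (forall y, gammaB l lam B <= y < deltaB l lam B ->
      S_B l lam pi y = iet (gammaB l lam B) lam B (restr pi B) y)) /\
  (* S_Bbar is the IET over Bbar (inherited order) with permutation pi|_Bbar *)
  ((forall b, b \in ~: B -> forall y,
      part_Bbar l lam B b y <-> inI (left_Bbar l lam B) lam (~: B) b y) /\
   (forall y, left_Bbar l lam B <= y < left_Bbar l lam B + lenB lam (~: B) ->
      S_Bbar l lam pi B y = iet (left_Bbar l lam B) lam (~: B) (restr pi (~: B)) y)).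
Proof.
move=> lam_gt0 B_neq0 _ B_contiguous B_invariant.
split; split.
- by move=> b bB y; rewrite (inI_setT_in l lam B_contiguous y bB).
- exact: S_B_iet lam_gt0 B_neq0 B_contiguous B_invariant.
- by move=> b bB y; apply: (part_Bbar_iff l lam_gt0 B_neq0 B_contiguous y bB).
- exact: S_Bbar_iet lam_gt0 B_neq0 B_contiguous B_invariant.
Qed.
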